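(* In the standing setting, suppose Assumption 1 holds with constant $\gamma_d>0$. Then for every $y\in\operatorname{int}Q$, $$[\nabla^2f(y)]^{-1}\preceq\frac{4}{\gamma_d^2}\,\big[f^*-\langle b,y\rangle\big]^2\,G^{-1}.$$
   Context: Standing setting: $\mathbb E,\mathbb H$ finite-dimensional real spaces with duals, pairing $\langle\cdot,\cdot\rangle$; $K\subset\mathbb E$ a regular cone with dual cone $K^*$; $F$ a $\nu$-normal barrier for $K$ and $F_*(s)=\max_{x\in\operatorname{int}K}\{-\langle s,x\rangle-F(x)\}$ its dual barrier. $A:\mathbb E\to\mathbb H^*$ linear, $c\in\mathbb E^*$, $b\in\mathbb H^*$; primal $\min\{\langle c,x\rangle:Ax=b,x\in K\}$, dual $\max\{\langle b,y\rangle:s+A^*y=c,s\in K^*\}$, both strictly feasible; $f^*$ is the optimal dual value. Central path: $(x_\mu,s_\mu,y_\mu)$ with $Ax_\mu=b$, $s_\mu+A^*y_\mu=c$, $s_\mu=-\mu\nabla F(x_\mu)$. $s(y)=c-A^*y$, $Q=\{y:s(y)\in K^*\}$, $f(y)=F_*(s(y))$ on $\operatorname{int}Q$. $B=\nabla^2F(x_1)$, $G=AB^{-1}A^*$, $\|y\|_G=\langle Gy,y\rangle^{1/2}$ for $y\in\mathbb H$. Assumption 1 (sharp dual maximum): there are an optimal dual pair $(s_*,y_* )$ and $\gamma_d>0$ such that $f^*-\langle b,y\rangle\ge\gamma_d\|y-y_*\|_G$ for all $y\in Q$. *)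

From Stdlib Require Import Reals.
From mathcomp Require Import ssreflect ssrfun ssrbool eqtype ssrnat fintype bigop.
Set Implicit Arguments. Unset Strict Implicit.
Open Scope R_scope.

(* Finite-dimensional real spaces are identified with R^n via a basis; the dual
   space with R^n via the dual basis, so the pairing <s,x> is the dot product. *)
Definition vec (n : nat) := 'I_n -> R.
Definition mat (m n : nat) := 'I_m -> 'I_n -> R.
Definition ten (n : nat) := 'I_n -> 'I_n -> 'I_n -> R.

Definition dot {n} (u v : vec n) : R := \big[Rplus/0]_(i < n) (u i * v i).
Definition vadd {n} (u v : vec n) : vec n := fun i => u i + v i.
Definition vsub {n} (u v : vec n) : vec n := fun i => u i - v i.
Definition vscale {n} (t : R) (u : vec n) : vec n := fun i => t * u i.
Definition vopp {n} (u : vec n) : vec n := fun i => - u i.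
Definition vzero {n} : vec n := fun _ => 0.
Definition vnorm {n} (u : vec n) : R := sqrt (dot u u).

Definition mulmv {m n} (A : mat m n) (x : vec n) : vec m :=
  fun i => \big[Rplus/0]_(j < n) (A i j * x j).
Definition trm {m n} (A : mat m n) : mat n m := fun j i => A i j.
Definition mulmm {m n p} (A : mat m n) (B : mat n p) : mat m p :=
  fun i k => \big[Rplus/0]_(j < n) (A i j * B j k).
Definition idm (n : nat) : mat n n := fun i j => if i == j then 1 else 0.
Arguments idm n : clear implicits.

Definition quad {n} (P : mat n n) (h : vec n) : R := dot (mulmv P h) h.
Definition cubic {n} (T : ten n) (h : vec n) : R :=
  \big[Rplus/0]_(i < n) \big[Rplus/0]_(j < n) \big[Rplus/0]_(k < n)
     (T i j k * h i * h j * h k).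

Definition loewner_le {n} (P Q : mat n n) : Prop :=
  forall u : vec n, quad P u <= quad Q u.

Definition vinterior {n} (S : vec n -> Prop) : vec n -> Prop :=
  fun x => exists eps, 0 < eps /\ forall z, vnorm (vsub z x) < eps -> S z.
Definition vclosed {n} (S : vec n -> Prop) : Prop :=
  forall x, (forall eps, 0 < eps -> exists z, S z /\ vnorm (vsub z x) < eps) -> S x.
Definition seq_conv {n} (xs : nat -> vec n) (x : vec n) : Prop :=
  forall eps, 0 < eps -> exists N, forall k, (N <= k)%nat -> vnorm (vsub (xs k) x) < eps.

Definition regular_cone {n} (K : vec n -> Prop) : Prop :=
  vclosed K /\
  (forall x t, K x -> 0 <= t -> K (vscale t x)) /\
  (forall x y, K x -> K y -> K (vadd x y)) /\
  (forall x, K x -> K (vopp x) -> forall i, x i = 0) /\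
  (exists x, vinterior K x).

Definition dual_cone {n} (K : vec n -> Prop) : vec n -> Prop :=
  fun s => forall x, K x -> 0 <= dot s x.

Definition is_grad {n} (f : vec n -> R) (x : vec n) (g : vec n) : Prop :=
  forall eps, 0 < eps -> exists delta, 0 < delta /\ forall h, vnorm h < delta ->
    Rabs (f (vadd x h) - f x - dot g h) <= eps * vnorm h.
Definition is_jac {n} (g : vec n -> vec n) (x : vec n) (J : mat n n) : Prop :=
  forall eps, 0 < eps -> exists delta, 0 < delta /\ forall h, vnorm h < delta ->
    forall i, Rabs (g (vadd x h) i - g x i - mulmv J h i) <= eps * vnorm h.
Definition is_dmat {n} (H : vec n -> mat n n) (x : vec n) (T : ten n) : Prop :=
  forall eps, 0 < eps -> exists delta, 0 < delta /\ forall h, vnorm h < delta ->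
    forall i j, Rabs (H (vadd x h) i j - H x i j
                      - \big[Rplus/0]_(k < n) (T i j k * h k)) <= eps * vnorm h.
Definition is_hessian {n} (f : vec n -> R) (y : vec n) (Hs : mat n n) : Prop :=
  exists (g : vec n -> vec n) (d : R), 0 < d /\
    (forall z, vnorm (vsub z y) < d -> is_grad f z (g z)) /\ is_jac g y Hs.

(* ---------- nu-normal barrier ----------
   F is a nu-normal barrier for K with gradient gF and Hessian HF on int K:
   F is C^3 on int K, convex, self-concordant, a barrier (blows up at the
   boundary), satisfies the nu-barrier inequality and is nu-logarithmically
   homogeneous. *)
Definition normal_barrier {n} (K : vec n -> Prop) (nu : R) (F : vec n -> R)
    (gF : vec n -> vec n) (HF : vec n -> mat n n) : Prop :=
  exists T : vec n -> ten n,
    (forall x, vinterior K x -> is_grad F x (gF x)) /\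
    (forall x, vinterior K x -> is_jac gF x (HF x)) /\
    (forall x, vinterior K x -> is_dmat HF x (T x)) /\
    (forall x, vinterior K x -> forall eps, 0 < eps -> exists delta, 0 < delta /\
        forall z, vnorm (vsub z x) < delta -> forall i j k,
          Rabs (T z i j k - T x i j k) <= eps) /\
    (forall x h, vinterior K x -> 0 <= quad (HF x) h) /\
    (forall x h, vinterior K x ->
        Rabs (cubic (T x) h) <= 2 * (quad (HF x) h * sqrt (quad (HF x) h))) /\
    (forall x h, vinterior K x -> (dot (gF x) h) ^ 2 <= nu * quad (HF x) h) /\
    (forall (xs : nat -> vec n) xb, (forall k, vinterior K (xs k)) ->
        seq_conv xs xb -> ~ vinterior K xb ->
        forall M, exists N, forall k, (N <= k)%nat -> M < F (xs k)) /\
    (forall x t, vinterior K x -> 0 < t -> F (vscale t x) = F x - nu * ln t).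

Definition is_dual_barrier {n} (K : vec n -> Prop) (F Fs : vec n -> R) : Prop :=
  forall s, vinterior (dual_cone K) s ->
    (exists x, vinterior K x /\ Fs s = - dot s x - F x) /\
    (forall x, vinterior K x -> - dot s x - F x <= Fs s).

(* Let s = c - A^T y and let x attain the maximum defining F_*(s), so that grad F(x) = -s.
   Fenchel's inequality F_*(s') >= -<s',x'> - F(x'), with equality at (s, x), compared through
   second differences at s -+ t A^T v and x +- t w, gives
   <grad^2 f(y) v, v> >= 2 <A^T v, w> - <grad^2 F(x) w, w> for every w.  For z in K the
   nu-barrier inequality makes <grad F, z> nonpositive along the ray x + t z, and
   self-concordance then yields <grad^2 F(x) z, z> <= <s, z>^2.  If |v|_G = N and
   r = f^* - <b,y>, sharpness forbids y + tau v and y - tau v from both lying in Q when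
   tau = 2 r / (gamma_d N); a point z in K certifying y + tau u outside Q (u = +-v), inserted
   as w = z / (tau^2 <A^T u, z>), gives <grad^2 f(y) v, v> >= 1 / tau^2.  Hence
   gamma_d^2 G <= 4 r^2 grad^2 f(y), and G is positive definite (A onto, grad^2 F(x_1)
   symmetric by Schwarz's theorem), so the Loewner order can be inverted. *)

From Stdlib Require Import Reals Lra FunctionalExtensionality Classical.
From mathcomp Require Import ssreflect ssrfun ssrbool eqtype ssrnat fintype bigop.
From mathcomp Require Import ssralg ssrnum matrix Rstruct.
Set Implicit Arguments. Unset Strict Implicit.
Open Scope R_scope.

Lemma sum_le n (F G : 'I_n -> R) :
  (forall i, F i <= G i) -> \big[Rplus/0]_(i < n) F i <= \big[Rplus/0]_(i < n) G i.
Proof. by move=> h; apply/RleP; apply: Num.Theory.ler_sum => i _; apply/RleP. Qed.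

Lemma sum_ge0 n (F : 'I_n -> R) : (forall i, 0 <= F i) -> 0 <= \big[Rplus/0]_(i < n) F i.
Proof. by move=> h; apply/RleP; apply: Num.Theory.sumr_ge0 => i _; apply/RleP. Qed.

Lemma sum_abs_le n (F : 'I_n -> R) :
  Rabs (\big[Rplus/0]_(i < n) F i) <= \big[Rplus/0]_(i < n) Rabs (F i).
Proof.
  elim/big_rec2: _ => [|i a b _ hab]; first by rewrite Rabs_R0; lra.
  have := Rabs_triang (F i) b; lra.
Qed.

Lemma sum_ge0_eq0 n (F : 'I_n -> R) :
  (forall i, 0 <= F i) -> \big[Rplus/0]_(i < n) F i = 0 -> forall i, F i = 0.
Proof.
  move=> h hs i; move: hs; rewrite (bigD1 i) //=; set S := \big[_/_]_(j | _) _.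
  have : 0 <= S by rewrite /S; elim/big_rec: _ => [|k a _ ha]; [lra | have := h k; lra].
  have := h i; lra.
Qed.

Lemma sumRN n (F : 'I_n -> R) : \big[Rplus/0]_(i < n) (- F i) = - \big[Rplus/0]_(i < n) F i.
Proof. by elim/big_rec2: _ => [|i a b _ ->]; ring. Qed.

Lemma sumRB n (F G : 'I_n -> R) :
  \big[Rplus/0]_(i < n) (F i - G i) = \big[Rplus/0]_(i < n) F i - \big[Rplus/0]_(i < n) G i.
Proof. by elim/big_rec3: _ => [|i a b c _ ->]; ring. Qed.

Lemma dotC n (u v : vec n) : dot u v = dot v u.
Proof. by apply: eq_bigr => i _ /=; ring. Qed.

Lemma dotDl n (u v w : vec n) : dot (vadd u v) w = dot u w + dot v w.
Proof. by rewrite /dot -big_split; apply: eq_bigr => i _ /=; rewrite /vadd; ring. Qed.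

Lemma dotDr n (u v w : vec n) : dot w (vadd u v) = dot w u + dot w v.
Proof. by rewrite /dot -big_split; apply: eq_bigr => i _ /=; rewrite /vadd; ring. Qed.

Lemma dotBl n (u v w : vec n) : dot (vsub u v) w = dot u w - dot v w.
Proof. by rewrite /dot -sumRB; apply: eq_bigr => i _ /=; rewrite /vsub; ring. Qed.

Lemma dotBr n (u v w : vec n) : dot w (vsub u v) = dot w u - dot w v.
Proof. by rewrite /dot -sumRB; apply: eq_bigr => i _ /=; rewrite /vsub; ring. Qed.

Lemma dotZl n t (u w : vec n) : dot (vscale t u) w = t * dot u w.
Proof. by rewrite /dot big_distrr; apply: eq_bigr => i _ /=; rewrite /vscale; ring. Qed.

Lemma dotZr n t (u w : vec n) : dot w (vscale t u) = t * dot w u.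
Proof. by rewrite /dot big_distrr; apply: eq_bigr => i _ /=; rewrite /vscale; ring. Qed.

Lemma dotNl n (u w : vec n) : dot (vopp u) w = - dot u w.
Proof. by rewrite /dot -sumRN; apply: eq_bigr => i _ /=; rewrite /vopp; ring. Qed.

Lemma dotNr n (u w : vec n) : dot w (vopp u) = - dot w u.
Proof. by rewrite /dot -sumRN; apply: eq_bigr => i _ /=; rewrite /vopp; ring. Qed.

Lemma dot0r n (w : vec n) : dot w vzero = 0.
Proof. by apply: big1 => i _; rewrite /vzero; ring. Qed.

Lemma dot_ge0 n (u : vec n) : 0 <= dot u u.
Proof. by apply: sum_ge0 => i; nra. Qed.

Lemma dot_eq0 n (u : vec n) : dot u u = 0 -> forall i, u i = 0.
Proof. by move=> h i; have := sum_ge0_eq0 (fun j => ltac:(nra) : 0 <= u j * u j) h i; nra. Qed.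

Lemma mulmvD m n (A : mat m n) u v : mulmv A (vadd u v) = vadd (mulmv A u) (mulmv A v).
Proof.
  apply: functional_extensionality => i.
  by rewrite /mulmv /vadd -big_split; apply: eq_bigr => j _ /=; ring.
Qed.

Lemma mulmvB m n (A : mat m n) u v : mulmv A (vsub u v) = vsub (mulmv A u) (mulmv A v).
Proof.
  apply: functional_extensionality => i.
  by rewrite /mulmv /vsub -sumRB; apply: eq_bigr => j _ /=; ring.
Qed.

Lemma mulmvZ m n (A : mat m n) t u : mulmv A (vscale t u) = vscale t (mulmv A u).
Proof.
  apply: functional_extensionality => i.
  by rewrite /mulmv /vscale big_distrr; apply: eq_bigr => j _ /=; ring.
Qed.

Lemma mulmvN m n (A : mat m n) u : mulmv A (vopp u) = vopp (mulmv A u).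
Proof.
  apply: functional_extensionality => i.
  by rewrite /mulmv /vopp -sumRN; apply: eq_bigr => j _ /=; ring.
Qed.

Lemma mulmv_mulmm m n p (A : mat m n) (B : mat n p) x :
  mulmv (mulmm A B) x = mulmv A (mulmv B x).
Proof.
  apply: functional_extensionality => i; rewrite /mulmv /mulmm.
  under eq_bigr => k _ do rewrite big_distrl.
  rewrite exchange_big; apply: eq_bigr => j _.
  by rewrite big_distrr; apply: eq_bigr => k _ /=; ring.
Qed.

Lemma mulmv_idm n (x : vec n) : mulmv (idm n) x = x.
Proof.
  apply: functional_extensionality => i; rewrite /mulmv /idm (bigD1 i) //= eqxx big1; first ring.
  by move=> j /negbTE; rewrite eq_sym => ->; ring.
Qed.

Lemma dot_trmv m n (A : mat m n) v x : dot (mulmv (trm A) v) x = dot v (mulmv A x).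
Proof.
  rewrite /dot /mulmv /trm.
  under eq_bigr => i _ do rewrite big_distrl.
  rewrite exchange_big; apply: eq_bigr => j _.
  by rewrite big_distrr; apply: eq_bigr => k _ /=; ring.
Qed.

Lemma mulmm_right_inv n (H B : mat n n) h : mulmm H B = idm n -> mulmv H (mulmv B h) = h.
Proof. by move=> e; rewrite -mulmv_mulmm e mulmv_idm. Qed.

Lemma quadZ n (P : mat n n) t u : quad P (vscale t u) = t * t * quad P u.
Proof. by rewrite /quad mulmvZ dotZl dotZr; ring. Qed.

Lemma quadN n (P : mat n n) u : quad P (vopp u) = quad P u.
Proof. by rewrite /quad mulmvN dotNl dotNr; ring. Qed.

Lemma quad0 n (P : mat n n) : quad P vzero = 0.
Proof. by rewrite /quad dot0r. Qed.

Lemma quad_scalem n (P : mat n n) k u : quad (fun i j => k * P i j) u = k * quad P u.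
Proof.
  rewrite /quad /dot big_distrr; apply: eq_bigr => i _ /=.
  by rewrite -Rmult_assoc /mulmv big_distrr; congr (_ * _); apply: eq_bigr => j _ /=; ring.
Qed.

Definition form_sym {n} (M : mat n n) : Prop := forall u v, dot (mulmv M u) v = dot (mulmv M v) u.
Definition form_psd {n} (M : mat n n) : Prop := forall h, 0 <= quad M h.
Definition form_definite {n} (M : mat n n) : Prop := forall v, quad M v = 0 -> forall i, v i = 0.

Lemma vaddKs n (p h : vec n) : vsub (vadd p h) p = h.
Proof. by apply: functional_extensionality => i; rewrite /vsub /vadd; ring. Qed.

Lemma vadd_scale0 n (p v : vec n) : vadd p (vscale 0 v) = p.
Proof. by apply: functional_extensionality => i; rewrite /vscale /vadd; ring. Qed.

Lemma vscaleN n t (w : vec n) : vscale t (vopp w) = vscale (- t) w.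
Proof. by apply: functional_extensionality => i; rewrite /vscale /vopp; ring. Qed.

Lemma vopp_scale n (w : vec n) : vopp w = vscale (-1) w.
Proof. by apply: functional_extensionality => i; rewrite /vopp /vscale; ring. Qed.

Lemma discriminant_le a b c :
  0 <= c -> (forall t, 0 <= a + 2 * b * t + c * t * t) -> b * b <= a * c.
Proof.
  move=> hc h; have [e|ne] := Req_dec c 0.
  - subst c; have [eb|nb] := Req_dec b 0; first by subst; lra.
    have := h (- (a + 1) / (2 * b)).
    have -> : a + 2 * b * (- (a + 1) / (2 * b)) + 0 * (- (a + 1) / (2 * b)) * (- (a + 1) / (2 * b))
                = -1 by field.
    lra.
  - have := h (- b / c).
    have -> : a + 2 * b * (- b / c) + c * (- b / c) * (- b / c) = (a * c - b * b) / c by field.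
    move=> hh; have : 0 <= (a * c - b * b) / c * c by apply: Rmult_le_pos; lra.
    have -> : (a * c - b * b) / c * c = a * c - b * b by field.
    lra.
Qed.

Lemma dot_CauchySchwarz n (u v : vec n) : dot u v * dot u v <= dot u u * dot v v.
Proof.
  apply: discriminant_le; first exact: dot_ge0.
  move=> t; have := dot_ge0 (vadd u (vscale t v)).
  rewrite !dotDl !dotDr !dotZl !dotZr (dotC v u); lra.
Qed.

Lemma vnorm_ge0 n (u : vec n) : 0 <= vnorm u.
Proof. exact: sqrt_pos. Qed.

Lemma vnorm_mul_self n (u : vec n) : vnorm u * vnorm u = dot u u.
Proof. exact/sqrt_sqrt/dot_ge0. Qed.

Lemma vnormZ n t (u : vec n) : vnorm (vscale t u) = Rabs t * vnorm u.
Proof.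
  rewrite /vnorm dotZl dotZr -Rmult_assoc sqrt_mult; [|nra|exact: dot_ge0].
  by change (t * t) with (Rsqr t); rewrite sqrt_Rsqr_abs.
Qed.

Lemma vnormN n (w : vec n) : vnorm (vopp w) = vnorm w.
Proof. by rewrite vopp_scale vnormZ Rabs_Ropp Rabs_R1; ring. Qed.

Lemma vnorm_ray n t (v : vec n) : 0 <= t -> vnorm (vscale t v) = t * vnorm v.
Proof. by move=> ht; rewrite vnormZ Rabs_right; lra. Qed.

Lemma vnormD_le n (u v : vec n) : vnorm (vadd u v) <= vnorm u + vnorm v.
Proof.
  have hu := vnorm_ge0 u; have hv := vnorm_ge0 v; have hw := vnorm_ge0 (vadd u v).
  have huv : dot u v <= vnorm u * vnorm v.
  { have hcs := dot_CauchySchwarz u v; rewrite -!vnorm_mul_self in hcs.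
    have := Rmult_le_pos _ _ hu hv.
    have [|hlt] := Rle_dec (dot u v) (vnorm u * vnorm v); [done | nra]. }
  have e := vnorm_mul_self (vadd u v); rewrite dotDl !dotDr (dotC v u) -!vnorm_mul_self in e.
  apply: Rnot_lt_le => hlt; nra.
Qed.

Definition l1norm {n} (u : vec n) : R := \big[Rplus/0]_(i < n) Rabs (u i).

Lemma l1norm_ge0 n (u : vec n) : 0 <= l1norm u.
Proof. by apply: sum_ge0 => i; apply: Rabs_pos. Qed.

Lemma dot_le_l1norm n (e w : vec n) E :
  (forall i, Rabs (e i) <= E) -> Rabs (dot e w) <= E * l1norm w.
Proof.
  move=> h; rewrite /l1norm big_distrr; apply: Rle_trans (sum_abs_le _) _.
  by apply: sum_le => i; rewrite Rabs_mult; apply: Rmult_le_compat_r; [apply: Rabs_pos | apply: h].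
Qed.

Definition near0 (P : R -> Prop) : Prop := exists d, 0 < d /\ forall t, 0 < t < d -> P t.

Lemma near0_and (P Q : R -> Prop) : near0 P -> near0 Q -> near0 (fun t => P t /\ Q t).
Proof.
  move=> [d1 [h1 H1]] [d2 [h2 H2]]; exists (Rmin d1 d2); split; first exact: Rmin_pos.
  by move=> t ht; have := Rmin_l d1 d2; have := Rmin_r d1 d2; split; [apply: H1 | apply: H2]; lra.
Qed.

Lemma near0_witness (P : R -> Prop) : near0 P -> exists t, 0 < t /\ P t.
Proof. by move=> [d [hd H]]; exists (d / 2); split; [|apply: H]; lra. Qed.

Lemma lt_div_succ t c d : 0 <= c -> 0 <= t -> t < d / (c + 1) -> t * c < d.
Proof.
  move=> hc ht h; have : t * (c + 1) < d.
    by have := Rmult_lt_compat_r (c + 1) _ _ ltac:(lra) h; rewrite /Rdiv Rmult_assoc Rinv_l; lra.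
  nra.
Qed.

Lemma div_succ_mul_le e c : 0 <= e -> 0 <= c -> e / (c + 1) * c <= e.
Proof.
  move=> he hc; have -> : e / (c + 1) * c = e - e / (c + 1) by field; lra.
  have : 0 <= e / (c + 1) by apply: Rmult_le_pos; [|left; apply: Rinv_0_lt_compat]; lra.
  lra.
Qed.

Lemma near0_scale_lt c d : 0 <= c -> 0 < d -> near0 (fun t => t * c < d).
Proof.
  move=> hc hd; exists (d / (c + 1)); split; first by apply: Rdiv_lt_0_compat; lra.
  by move=> t [ht0 ht]; apply: lt_div_succ => //; lra.
Qed.

Lemma interior_ball n (S : vec n -> Prop) x :
  vinterior S x -> exists r, 0 < r /\ forall q, vnorm (vsub q x) < r -> vinterior S q.
Proof.
  move=> [e [he He]]; exists (e / 2); split; first lra.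
  move=> q hq; exists (e / 2); split; first lra; move=> w hw; apply: He.
  have -> : vsub w x = vadd (vsub w q) (vsub q x).
    by apply: functional_extensionality => i; rewrite /vsub /vadd; ring.
  have := vnormD_le (vsub w q) (vsub q x); lra.
Qed.

Lemma interior_mem n (S : vec n -> Prop) u : vinterior S u -> S u.
Proof.
  move=> [e [he He]]; apply: He.
  by rewrite (_ : vsub u u = vscale 0 u) ?vnormZ ?Rabs_R0;
    [lra | apply: functional_extensionality => i; rewrite /vsub /vscale; ring].
Qed.

Lemma near0_interior_ray n (S : vec n -> Prop) x v :
  vinterior S x -> near0 (fun t => vinterior S (vadd x (vscale t v))).
Proof.
  case/interior_ball => r [hr Hr].
  have [d [hd H]] := near0_scale_lt (vnorm_ge0 v) hr.
  exists d; split => // t ht; apply: Hr.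
  by rewrite vaddKs vnorm_ray; [apply: H | lra].
Qed.

(** * Derivatives along lines *)

Definition has_ray_deriv {n} (Phi : vec n -> R) (p z : vec n) (l : R) : Prop :=
  forall eps, 0 < eps -> exists delta, 0 < delta /\ forall d, Rabs d * vnorm z < delta ->
    Rabs (Phi (vadd p (vscale d z)) - Phi p - d * l) <= eps * (Rabs d * vnorm z).

Lemma ray_deriv_line n (Phi : vec n -> R) (x0 z : vec n) t0 l :
  has_ray_deriv Phi (vadd x0 (vscale t0 z)) z l ->
  derivable_pt_lim (fun t => Phi (vadd x0 (vscale t z))) t0 l.
Proof.
  move=> H eps heps; have hz := vnorm_ge0 z.
  have he' : 0 < eps / 2 / (vnorm z + 1) by apply: Rdiv_lt_0_compat; lra.
  have [d [hd Hd]] := H _ he'.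
  have hdel : 0 < d / (vnorm z + 1) by apply: Rdiv_lt_0_compat; lra.
  exists (mkposreal _ hdel) => h hn0 /= hh.
  have hpos : 0 < Rabs h by apply: Rabs_pos_lt.
  have -> : vadd x0 (vscale (t0 + h) z) = vadd (vadd x0 (vscale t0 z)) (vscale h z).
    by apply: functional_extensionality => i; rewrite /vadd /vscale; ring.
  have := Hd h (lt_div_succ hz (Rabs_pos h) hh).
  set E := Phi _ - Phi _ - h * l => hE.
  have -> : (Phi (vadd (vadd x0 (vscale t0 z)) (vscale h z)) - Phi (vadd x0 (vscale t0 z))) / h - l
            = E / h by rewrite /E; field.
  rewrite /Rdiv Rabs_mult Rabs_inv.
  have hk := div_succ_mul_le (Rlt_le _ _ (ltac:(lra) : 0 < eps / 2)) hz.
  have : Rabs E * / Rabs h <= eps / 2 / (vnorm z + 1) * vnorm z.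
  { have -> : eps / 2 / (vnorm z + 1) * vnorm z
             = eps / 2 / (vnorm z + 1) * (Rabs h * vnorm z) * / Rabs h by field; lra.
    by apply: Rmult_le_compat_r; [left; exact: Rinv_0_lt_compat | exact: hE]. }
  lra.
Qed.

Lemma grad_ray_deriv n (F : vec n -> R) p g z : is_grad F p g -> has_ray_deriv F p z (dot g z).
Proof.
  move=> H eps he; have [d [hd Hd]] := H eps he; exists d; split => // t ht.
  by have := Hd (vscale t z); rewrite vnormZ dotZr; apply.
Qed.

Lemma grad_line n (phi : vec n -> R) g (x0 z : vec n) t0 :
  is_grad phi (vadd x0 (vscale t0 z)) g ->
  derivable_pt_lim (fun t => phi (vadd x0 (vscale t z))) t0 (dot g z).
Proof. by move=> h; apply: ray_deriv_line; apply: grad_ray_deriv. Qed.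

Lemma jac_dot_small n (g : vec n -> vec n) p J :
  is_jac g p J -> forall eps, 0 < eps -> exists d, 0 < d /\ forall h u, vnorm h < d ->
    Rabs (dot (g (vadd p h)) u - dot (g p) u - dot (mulmv J h) u) <= eps * vnorm h * l1norm u.
Proof.
  move=> H eps he; have [d [hd Hd]] := H eps he; exists d; split => // h u hh.
  rewrite -!dotBl; apply: dot_le_l1norm => i; exact: Hd.
Qed.

Lemma jac_ray_deriv n (g : vec n -> vec n) p J z w :
  is_jac g p J -> has_ray_deriv (fun q => dot (g q) w) p z (dot (mulmv J z) w).
Proof.
  move=> H eps he; have hw := l1norm_ge0 w.
  have [d [hd Hd]] := jac_dot_small H (Rdiv_lt_0_compat _ _ he (ltac:(lra) : 0 < l1norm w + 1)).
  exists d; split => // t ht.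
  have := Hd (vscale t z) w; rewrite vnormZ mulmvZ dotZl => /(_ ht) hb.
  apply: Rle_trans hb _.
  have hp : 0 <= Rabs t * vnorm z := Rmult_le_pos _ _ (Rabs_pos t) (vnorm_ge0 z).
  have := div_succ_mul_le (Rlt_le _ _ he) hw.
  have -> : eps / (l1norm w + 1) * (Rabs t * vnorm z) * l1norm w
           = eps / (l1norm w + 1) * l1norm w * (Rabs t * vnorm z) by ring.
  by move=> h; apply: Rmult_le_compat_r.
Qed.

Lemma quad_cubic n (T : ten n) d z :
  quad (fun i j => \big[Rplus/0]_(k < n) (T i j k * (d * z k))) z = d * cubic T z.
Proof.
  rewrite /quad /dot /cubic /mulmv big_distrr; apply: eq_bigr => i _ /=.
  rewrite big_distrl big_distrr; apply: eq_bigr => j _ /=.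
  by rewrite !big_distrl big_distrr; apply: eq_bigr => k _ /=; ring.
Qed.

Lemma quad_le_l1norm n (E : mat n n) z M :
  (forall i j, Rabs (E i j) <= M) -> Rabs (quad E z) <= M * l1norm z * l1norm z.
Proof. by move=> h; apply: dot_le_l1norm => i; apply: dot_le_l1norm => j; apply: h. Qed.

Lemma dmat_ray_deriv n (H : vec n -> mat n n) p T z :
  is_dmat H p T -> has_ray_deriv (fun q => quad (H q) z) p z (cubic T z).
Proof.
  move=> Hd eps he; have hw := l1norm_ge0 z; set L := l1norm z * l1norm z.
  have hL : 0 <= L by apply: Rmult_le_pos.
  have [d [hd Hd']] := Hd _ (Rdiv_lt_0_compat _ _ he (ltac:(lra) : 0 < L + 1)).
  exists d; split => // t ht.
  have hn : vnorm (vscale t z) < d by rewrite vnormZ.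
  have hp : 0 <= Rabs t * vnorm z := Rmult_le_pos _ _ (Rabs_pos t) (vnorm_ge0 z).
  rewrite -quad_cubic.
  have -> : quad (H (vadd p (vscale t z))) z - quad (H p) z
            - quad (fun i j => \big[Rplus/0]_(k < n) (T i j k * (t * z k))) z
          = quad (fun i j => H (vadd p (vscale t z)) i j - H p i j
                             - \big[Rplus/0]_(k < n) (T i j k * vscale t z k)) z.
  { rewrite /quad /dot -!sumRB; apply: eq_bigr => i _ /=.
    rewrite /mulmv -!Rmult_minus_distr_r -!sumRB; congr (_ * _).
    by apply: eq_bigr => j _ /=; rewrite /vscale; ring. }
  apply: Rle_trans (quad_le_l1norm _ (fun i j => Hd' _ hn i j)) _.
  rewrite vnormZ -/L.
  have := div_succ_mul_le (Rlt_le _ _ he) hL.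
  have -> : eps / (L + 1) * (Rabs t * vnorm z) * l1norm z * l1norm z
           = eps / (L + 1) * L * (Rabs t * vnorm z) by rewrite /L; ring.
  by move=> h; apply: Rmult_le_compat_r.
Qed.

Lemma deriv_local_max f x l : derivable_pt_lim f x l ->
  (exists d, 0 < d /\ forall t, Rabs (t - x) < d -> f t <= f x) -> l = 0.
Proof.
  move=> H [d [hd Hd]].
  rewrite -(@derive_pt_eq_0 f x l (exist _ l H) H).
  apply: (deriv_maximum _ (x - d) (x + d)); [lra | lra |] => t h1 h2.
  by apply: Hd; apply: Rabs_def1; lra.
Qed.

Lemma nonincreasing_deriv f f' a b : a <= b ->
  (forall t, a <= t <= b -> derivable_pt_lim f t (f' t)) ->
  (forall t, a <= t <= b -> f' t <= 0) -> f b <= f a.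
Proof.
  move=> hab hd hn; have [e|ne] := Req_dec a b; first by subst; lra.
  have [c [hc1 hc2]] := MVT_cor2 f f' a b ltac:(lra) hd.
  have := hn c ltac:(lra); nra.
Qed.

Lemma nonpos_of_deriv_nonpos_when_pos f f' :
  (forall t, 0 <= t -> derivable_pt_lim f t (f' t)) -> f 0 <= 0 ->
  (forall t, 0 <= t -> 0 < f t -> f' t <= 0) -> forall t, 0 <= t -> f t <= 0.
Proof.
  move=> hd h0 hn T hT; apply: Rnot_lt_le => hfT.
  pose E s := 0 <= s <= T /\ f s <= 0.
  have hb : bound E by exists T => s [[_ ?] _].
  have [m [hub hlub]] := completeness E hb (ex_intro _ 0 (conj (conj (Rle_refl 0) hT) h0)).
  have hm0 : 0 <= m by apply: hub; rewrite /E; lra.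
  have hmT : m <= T by apply: hlub => s [[_ ?] _].
  have hfm : f m <= 0.
  { apply: Rnot_lt_le => hpos.
    have [e [he He]] := @derivable_continuous_pt f m (exist _ _ (hd m hm0)) _ hpos.
    have [e0|ne] := Req_dec m 0; first by rewrite e0 in hpos; lra.
    have hmin : 0 < Rmin (e / 2) m by apply: Rmin_pos; lra.
    suff /hlub : is_upper_bound E (m - Rmin (e / 2) m) by lra.
    move=> s hs; apply: Rnot_lt_le => hlt.
    have hsm : s < m.
      by have := hub s hs; case: hs => _ hfs; have [es|] := Req_dec s m; [subst; lra | lra].
    have hdist : Rabs (s - m) < e by rewrite Rabs_left1; have := Rmin_l (e / 2) m; lra.
    have := He s (conj (conj I (Rgt_not_eq m s ltac:(lra))) hdist); rewrite /= /R_dist.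
    by case: hs => _ hfs /Rabs_def2; lra. }
  have hmT' : m < T by have [e|] := Req_dec m T; [subst; lra | lra].
  have [c [hc1 hc2]] := MVT_cor2 f f' m T hmT' (fun t ht => hd t ltac:(lra)).
  have hfc : 0 < f c.
  { apply: Rnot_le_lt => hle; have : c <= m by apply: hub; rewrite /E; lra.
    lra. }
  have := hn c ltac:(lra) hfc; nra.
Qed.

Lemma derivable_pt_lim_scal_id c x : derivable_pt_lim (fun t => t * c) x c.
Proof.
  apply: (derivable_pt_lim_ext (fun t => c * t)); first by move=> t; ring.
  by have := derivable_pt_lim_scal id c x 1 (derivable_pt_lim_id x); rewrite Rmult_1_r.
Qed.

Lemma derivable_pt_lim_shift c x : derivable_pt_lim (fun t => c + t) x 1.
Proof.
  have := derivable_pt_lim_plus (fct_cte c) id x 0 1 (derivable_pt_lim_const c x)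
                                 (derivable_pt_lim_id x).
  by rewrite Rplus_0_l.
Qed.

Lemma derivable_pt_lim_Rinv f x l : derivable_pt_lim f x l -> f x <> 0 ->
  derivable_pt_lim (fun t => / f t) x (- l / (f x * f x)).
Proof.
  move=> h hn; have := derivable_pt_lim_div _ _ _ _ _ (derivable_pt_lim_const 1 x) h hn.
  rewrite /fct_cte /Rsqr (_ : (0 * f x - l * 1) / (f x * f x) = - l / (f x * f x)); last by field.
  by apply: derivable_pt_lim_ext => t; rewrite /div_fct /Rdiv Rmult_1_l.
Qed.

(** * Second differences *)

Section SecondDifferences.

Variables (n : nat) (phi : vec n -> R) (g : vec n -> vec n) (J : mat n n) (p : vec n) (r : R).
Hypothesis hr : 0 < r.
Hypothesis hg : forall q, vnorm (vsub q p) < r -> is_grad phi q (g q).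
Hypothesis hJ : is_jac g p J.

(* Mean value theorem for [s |-> phi (a + s u) - phi (b + s u)], whose derivative is
   [<g (a + s u) - g (b + s u), u>], i.e. [<J (a - b), u>] up to the Jacobian remainders at
   both points. *)
Lemma increment_difference_est eps : 0 < eps -> exists d, 0 < d /\
  forall a b u t D, 0 <= t -> D < d ->
  (forall s, 0 <= s <= t ->
     vnorm (vsub (vadd a (vscale s u)) p) <= D /\ vnorm (vsub (vadd b (vscale s u)) p) <= D) ->
  Rabs (phi (vadd a (vscale t u)) - phi (vadd b (vscale t u)) - phi a + phi b
        - t * dot (mulmv J (vsub a b)) u) <= eps * t * (2 * D * l1norm u).
Proof.
  move=> he; have [dJ [hdJ HJ]] := jac_dot_small hJ he.
  exists (Rmin dJ r); split; first exact: Rmin_pos.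
  move=> a b u t D ht hD hs; have := Rmin_l dJ r; have := Rmin_r dJ r => hmr hmJ.
  have [->|htp] := Req_dec t 0.
    by rewrite !vadd_scale0 (_ : _ - _ = 0) ?Rabs_R0; [apply: Req_le; ring | ring].
  set k := dot (mulmv J (vsub a b)) u.
  pose psi s := phi (vadd a (vscale s u)) - phi (vadd b (vscale s u)) - s * k.
  pose psi' s := dot (g (vadd a (vscale s u))) u - dot (g (vadd b (vscale s u))) u - k.
  have hd : forall s, 0 <= s <= t -> derivable_pt_lim psi s (psi' s).
  { move=> s /hs [ha hb].
    apply: derivable_pt_lim_minus; last exact: derivable_pt_lim_scal_id.
    by apply: derivable_pt_lim_minus; apply: grad_line; apply: hg; lra. }
  have hb : forall s, 0 <= s <= t -> Rabs (psi' s) <= eps * (2 * D * l1norm u).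
  { move=> s /hs; set qa := vadd a (vscale s u); set qb := vadd b (vscale s u); case=> ha hb.
    have hu := l1norm_ge0 u.
    have e : psi' s = (dot (g (vadd p (vsub qa p))) u - dot (g p) u - dot (mulmv J (vsub qa p)) u)
                    - (dot (g (vadd p (vsub qb p))) u - dot (g p) u - dot (mulmv J (vsub qb p)) u).
    { have hq : forall q, vadd p (vsub q p) = q.
        by move=> q; apply: functional_extensionality => i; rewrite /vadd /vsub; ring.
      rewrite /psi' /k (_ : vsub a b = vsub (vsub qa p) (vsub qb p)).
        by rewrite !hq mulmvB dotBl /qa /qb; ring.
      by apply: functional_extensionality => i; rewrite /vsub /qa /qb /vadd /vscale; ring. }
    rewrite e; apply: Rle_trans (Rabs_triang _ _) _; rewrite Rabs_Ropp.
    have := HJ _ u (ltac:(lra) : vnorm (vsub qa p) < dJ).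
    have := HJ _ u (ltac:(lra) : vnorm (vsub qb p) < dJ).
    have := Rmult_le_compat_r _ _ _ hu (Rmult_le_compat_l _ _ _ (Rlt_le _ _ he) ha).
    have := Rmult_le_compat_r _ _ _ hu (Rmult_le_compat_l _ _ _ (Rlt_le _ _ he) hb).
    lra. }
  have [c [hc1 hc2]] := MVT_cor2 psi psi' 0 t ltac:(lra) hd.
  have -> : phi (vadd a (vscale t u)) - phi (vadd b (vscale t u)) - phi a + phi b - t * k
            = psi t - psi 0 by rewrite /psi !vadd_scale0; ring.
  rewrite hc1 Rabs_mult Rminus_0_r (Rabs_right t); last lra.
  have := hb c ltac:(lra); have := Rabs_pos (psi' c); nra.
Qed.

Lemma second_difference_est v eps : 0 < eps -> near0 (fun t =>
  Rabs (phi (vadd p (vscale t v)) + phi (vadd p (vscale t (vopp v))) - 2 * phi p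
        - t * t * quad J v) <= eps * (t * t)).
Proof.
  move=> he; have hv := vnorm_ge0 v; have hl := l1norm_ge0 v.
  set C := 2 * vnorm v * l1norm v; have hC : 0 <= C by rewrite /C; nra.
  have [d [hd H]] := increment_difference_est (Rdiv_lt_0_compat _ _ he (ltac:(lra) : 0 < C + 1)).
  have [d' [hd' Hd']] := near0_scale_lt hv hd.
  exists d'; split => // t ht; set b := vadd p (vscale t (vopp v)).
  have hs : forall s, 0 <= s <= t -> vnorm (vsub (vadd p (vscale s v)) p) <= t * vnorm v
                                  /\ vnorm (vsub (vadd b (vscale s v)) p) <= t * vnorm v.
  { move=> s hs; rewrite vaddKs vnorm_ray; last lra; split; first nra.
    rewrite (_ : vsub _ p = vscale (t - s) (vopp v)) ?vnorm_ray ?vnormN; [nra | lra |].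
    by apply: functional_extensionality => i; rewrite /b /vadd /vsub /vscale /vopp; ring. }
  have := H p b v t (t * vnorm v) ltac:(lra) (Hd' t ht) hs.
  rewrite (_ : vadd b (vscale t v) = p); last first.
    by apply: functional_extensionality => i; rewrite /b /vadd /vscale /vopp; ring.
  rewrite (_ : vsub p b = vscale t v); last first.
    by apply: functional_extensionality => i; rewrite /b /vadd /vsub /vscale /vopp; ring.
  rewrite mulmvZ dotZl -/(quad J v) => hb.
  have -> : phi (vadd p (vscale t v)) + phi b - 2 * phi p - t * t * quad J v
          = phi (vadd p (vscale t v)) - phi p - phi p + phi b - t * (t * quad J v) by ring.
  apply: Rle_trans hb _.
  have := div_succ_mul_le (Rlt_le _ _ he) hC.
  have htt : 0 <= t * t by nra.
  have -> : eps / (C + 1) * t * (2 * (t * vnorm v) * l1norm v) = eps / (C + 1) * C * (t * t)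
    by rewrite /C; ring.
  by move=> h; apply: Rmult_le_compat_r.
Qed.

Lemma mixed_difference_est u v eps : 0 < eps -> near0 (fun t =>
  Rabs (phi (vadd (vadd p (vscale t v)) (vscale t u)) - phi (vadd p (vscale t u))
        - phi (vadd p (vscale t v)) + phi p - t * t * dot (mulmv J v) u) <= eps * (t * t)).
Proof.
  move=> he; have hu := vnorm_ge0 u; have hv := vnorm_ge0 v; have hl := l1norm_ge0 u.
  set C := 2 * (vnorm u + vnorm v) * l1norm u; have hC : 0 <= C by rewrite /C; nra.
  have [d [hd H]] := increment_difference_est (Rdiv_lt_0_compat _ _ he (ltac:(lra) : 0 < C + 1)).
  have [d' [hd' Hd']] := near0_scale_lt (ltac:(lra) : 0 <= vnorm u + vnorm v) hd.
  exists d'; split => // t ht; set a := vadd p (vscale t v).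
  have hs : forall s, 0 <= s <= t -> vnorm (vsub (vadd a (vscale s u)) p) <= t * (vnorm u + vnorm v)
                                  /\ vnorm (vsub (vadd p (vscale s u)) p) <= t * (vnorm u + vnorm v).
  { move=> s hs; rewrite vaddKs vnorm_ray; last lra; split; last nra.
    rewrite (_ : vsub _ p = vadd (vscale t v) (vscale s u)); last first.
      by apply: functional_extensionality => i; rewrite /a /vadd /vsub /vscale; ring.
    apply: Rle_trans (vnormD_le _ _) _; rewrite !vnorm_ray; nra. }
  have := H a p u t (t * (vnorm u + vnorm v)) ltac:(lra) (Hd' t ht) hs.
  rewrite (_ : vsub a p = vscale t v) ?vaddKs // mulmvZ dotZl => hb.
  have -> : phi (vadd a (vscale t u)) - phi (vadd p (vscale t u)) - phi a + phi p
            - t * t * dot (mulmv J v) u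
          = phi (vadd a (vscale t u)) - phi (vadd p (vscale t u)) - phi a + phi p
            - t * (t * dot (mulmv J v) u) by ring.
  apply: Rle_trans hb _.
  have := div_succ_mul_le (Rlt_le _ _ he) hC.
  have htt : 0 <= t * t by nra.
  have -> : eps / (C + 1) * t * (2 * (t * (vnorm u + vnorm v)) * l1norm u)
          = eps / (C + 1) * C * (t * t) by rewrite /C; ring.
  by move=> h; apply: Rmult_le_compat_r.
Qed.

(* Schwarz's theorem: both mixed second differences approximate the same quantity. *)
Lemma jacobian_sym : form_sym J.
Proof.
  move=> u v; set x := dot (mulmv J u) v; set y := dot (mulmv J v) u.
  suff key : forall eps, 0 < eps -> Rabs (x - y) <= 2 * eps.
  { have [//|ne] := Req_dec x y; have hp : 0 < Rabs (x - y) by apply: Rabs_pos_lt; lra.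
    have := key (Rabs (x - y) / 4) ltac:(lra); lra. }
  move=> eps he.
  have [t [ht [H1 H2]]] := near0_witness (near0_and (mixed_difference_est v u he)
                                                    (mixed_difference_est u v he)).
  move: H1 H2.
  have -> : vadd (vadd p (vscale t u)) (vscale t v) = vadd (vadd p (vscale t v)) (vscale t u).
    by apply: functional_extensionality => i; rewrite /vadd /vscale; ring.
  rewrite -/x -/y; set D := phi (vadd (vadd p (vscale t v)) (vscale t u)).
  move=> H1 H2; have htt : 0 < t * t by nra.
  apply: (Rmult_le_reg_r (t * t)) => //; rewrite -{1}(Rabs_right (t * t)); last lra.
  rewrite -Rabs_mult.
  have -> : (x - y) * (t * t)
          = (D - phi (vadd p (vscale t u)) - phi (vadd p (vscale t v)) + phi p - t * t * y)
            - (D - phi (vadd p (vscale t v)) - phi (vadd p (vscale t u)) + phi p - t * t * x) by ring.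
  apply: Rle_trans (Rabs_triang _ _) _; rewrite Rabs_Ropp; lra.
Qed.

End SecondDifferences.

(** * Barrier functions along rays of the cone *)

(* If [q' = q2 >= 0] and [q^2 <= nu q2], then [1/q + t/nu] decreases while [q > 0];
   a positive [q 0] would force [1/q] negative at [t = 2 nu / q 0]. *)
Lemma nonpos_of_sq_le_deriv (q q2 : R -> R) nu :
  (forall t, 0 <= t -> derivable_pt_lim q t (q2 t)) -> (forall t, 0 <= t -> 0 <= q2 t) ->
  (forall t, 0 <= t -> q t * q t <= nu * q2 t) -> q 0 <= 0.
Proof.
  move=> hd hq2 hnu; apply: Rnot_lt_le => ha.
  have hmono : forall t, 0 <= t -> q 0 <= q t.
  { move=> t ht; suff : - q t <= - q 0 by lra.
    apply: (nonincreasing_deriv (f := fun s => - q s) (f' := fun s => - q2 s)) => // s hs.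
    - exact: derivable_pt_lim_opp (hd s ltac:(lra)).
    - have := hq2 s ltac:(lra); lra. }
  have hnupos : 0 < nu.
  { have := hnu 0 (Rle_refl 0); have := hq2 0 (Rle_refl 0).
    have [hn|//] := Rle_lt_dec nu 0; nra. }
  set T := 2 * nu / q 0.
  have hT : 0 <= T by apply: Rmult_le_pos; [lra | left; apply: Rinv_0_lt_compat].
  have : / q T + T * / nu <= / q 0 + 0 * / nu.
  { apply: (nonincreasing_deriv (f := fun s => / q s + s * / nu)
                                (f' := fun s => - q2 s / (q s * q s) + / nu)) => // s hs.
    - have := hmono s ltac:(lra) => h1.
      apply: derivable_pt_lim_plus; last exact: derivable_pt_lim_scal_id.
      by apply: derivable_pt_lim_Rinv; [apply: hd | ]; lra.
    - have := hmono s ltac:(lra) => h1; have hp : 0 < q s * q s by nra.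
      suff : / nu <= q2 s / (q s * q s) by rewrite /Rdiv -Ropp_mult_distr_l; lra.
      apply: (Rmult_le_reg_r (q s * q s)) => //; apply: (Rmult_le_reg_l nu) => //.
      have -> : nu * (q2 s / (q s * q s) * (q s * q s)) = nu * q2 s by field; lra.
      have -> : nu * (/ nu * (q s * q s)) = q s * q s by field; lra.
      by apply: hnu; lra. }
  have -> : T * / nu = 2 * / q 0 by rewrite /T; field; lra.
  have : 0 < / q T by have := hmono T hT; move=> h; apply: Rinv_0_lt_compat; lra.
  have : 0 < / q 0 by apply: Rinv_0_lt_compat.
  lra.
Qed.

(* Comparison with the solution [1 / (c + t)^2] of [y' = -2 y^(3/2)]. *)
Lemma self_concordant_ray_lower_bound (phi phi' : R -> R) :
  (forall t, 0 <= t -> derivable_pt_lim phi t (phi' t)) -> (forall t, 0 <= t -> 0 <= phi t) ->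
  (forall t, 0 <= t -> - 2 * (phi t * sqrt (phi t)) <= phi' t) -> 0 < phi 0 ->
  forall t, 0 <= t -> 1 <= phi t * ((/ sqrt (phi 0) + t) * (/ sqrt (phi 0) + t)).
Proof.
  move=> hd hphi hcub hp0 t ht; set c := / sqrt (phi 0).
  have hs0 : 0 < sqrt (phi 0) by apply: sqrt_lt_R0.
  have hc : 0 < c by apply: Rinv_0_lt_compat.
  suff : 1 - phi t * ((c + t) * (c + t)) <= 0 by lra.
  apply: (nonpos_of_deriv_nonpos_when_pos (f := fun t => 1 - phi t * ((c + t) * (c + t)))
    (f' := fun t => - (phi' t * ((c + t) * (c + t)) + phi t * (2 * (c + t))))) => //.
  - move=> s hs /=.
    have := derivable_pt_lim_mult _ _ s _ _ (derivable_pt_lim_shift c s) (derivable_pt_lim_shift c s).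
    move/(derivable_pt_lim_mult _ _ s _ _ (hd s hs)).
    move/(derivable_pt_lim_minus _ _ s _ _ (derivable_pt_lim_const 1 s)).
    rewrite Rminus_0_l (_ : 1 * (c + s) + (c + s) * 1 = 2 * (c + s)); last ring.
    by apply: derivable_pt_lim_ext => u; rewrite /minus_fct /mult_fct /fct_cte.
  - rewrite Rplus_0_r -[X in 1 - X * _](sqrt_sqrt _ (Rlt_le _ _ hp0)).
    have : sqrt (phi 0) * c = 1 by rewrite /c Rinv_r; lra.
    nra.
  - move=> s hs hzt; have hpt := hphi s hs; have hsst := sqrt_sqrt _ hpt.
    have hst := sqrt_pos (phi s); set r := sqrt (phi s) in hst hsst.
    have hsw : r * (c + s) < 1.
    { apply: Rnot_le_lt => hle; have : 1 <= (r * (c + s)) * (r * (c + s)) by nra.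
      have -> : (r * (c + s)) * (r * (c + s)) = phi s * ((c + s) * (c + s)) by rewrite -hsst; ring.
      lra. }
    have hc3 := hcub s hs; rewrite -/r in hc3.
    have : - 2 * (phi s * r) * ((c + s) * (c + s)) <= phi' s * ((c + s) * (c + s)).
      by apply: Rmult_le_compat_r; nra.
    have : 0 <= phi s * (c + s) * (1 - r * (c + s)) by apply: Rmult_le_pos; nra.
    nra.
Qed.

(* [g - 1 / (c + t)] is nonincreasing and [g >= 0], so it cannot start below [-1 / c]. *)
Lemma inv_le_of_deriv_le (g phi : R -> R) c : 0 < c ->
  (forall t, 0 <= t -> derivable_pt_lim g t (- phi t)) -> (forall t, 0 <= t -> 0 <= g t) ->
  (forall t, 0 <= t -> 1 <= phi t * ((c + t) * (c + t))) -> / c <= g 0.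
Proof.
  move=> hc hd hg hphi; apply: Rnot_lt_le => hlt.
  set T := / (/ c - g 0); have hT : 0 < T by apply: Rinv_0_lt_compat; lra.
  have : g T - / (c + T) <= g 0 - / (c + 0).
  { apply: (nonincreasing_deriv (f := fun t => g t - / (c + t))
                                (f' := fun t => - phi t - (- 1 / ((c + t) * (c + t))))); first lra.
    - move=> t ht; apply: derivable_pt_lim_minus; first by apply: hd; lra.
      by apply: (derivable_pt_lim_Rinv (f := fun t => c + t)); [apply: derivable_pt_lim_shift | lra].
    - move=> t ht; have := hphi t ltac:(lra); have hw : 0 < (c + t) * (c + t) by nra.
      move=> h1; suff : 1 / ((c + t) * (c + t)) <= phi t by rewrite /Rdiv; lra.
      apply: (Rmult_le_reg_r ((c + t) * (c + t))) => //.
      by rewrite /Rdiv Rmult_assoc Rinv_l; lra. }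
  rewrite Rplus_0_r; have := hg T (Rlt_le _ _ hT).
  have : / T = / c - g 0 by rewrite /T Rinv_inv.
  have : / (c + T) < / T by apply: Rinv_lt_contravar; nra.
  lra.
Qed.

Lemma cone_interior_ray n (K : vec n -> Prop) u z t : regular_cone K ->
  vinterior K u -> K z -> 0 <= t -> vinterior K (vadd u (vscale t z)).
Proof.
  move=> [_ [hsc [hadd _]]] [e [he He]] hz ht; exists e; split => // w hw.
  have -> : w = vadd (vsub w (vscale t z)) (vscale t z).
    by apply: functional_extensionality => i; rewrite /vsub /vadd /vscale; ring.
  apply: hadd; last exact: hsc; apply: He.
  rewrite (_ : vsub _ u = vsub w (vadd u (vscale t z))) //.
  by apply: functional_extensionality => i; rewrite /vsub /vadd /vscale; ring.
Qed.

Section BarrierOnCone.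

Variables (n : nat) (K : vec n -> Prop) (nu : R) (gF : vec n -> vec n) (HF : vec n -> mat n n).
Variables (T : vec n -> ten n).
Hypothesis hK : regular_cone K.
Hypothesis hjac : forall x, vinterior K x -> is_jac gF x (HF x).
Hypothesis hdmat : forall x, vinterior K x -> is_dmat HF x (T x).
Hypothesis hpsd : forall x h, vinterior K x -> 0 <= quad (HF x) h.
Hypothesis hsc : forall x h, vinterior K x ->
  Rabs (cubic (T x) h) <= 2 * (quad (HF x) h * sqrt (quad (HF x) h)).
Hypothesis hnu : forall x h, vinterior K x -> (dot (gF x) h) ^ 2 <= nu * quad (HF x) h.

Lemma grad_dot_cone_nonpos u z : vinterior K u -> K z -> dot (gF u) z <= 0.
Proof.
  move=> hu hz.
  have hint t : 0 <= t -> vinterior K (vadd u (vscale t z)) := cone_interior_ray hK hu hz.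
  have := nonpos_of_sq_le_deriv (q := fun t => dot (gF (vadd u (vscale t z))) z)
                                (q2 := fun t => quad (HF (vadd u (vscale t z))) z) (nu := nu).
  rewrite /= vadd_scale0; apply.
  - move=> t /hint hi; apply: (ray_deriv_line (Phi := fun q => dot (gF q) z)).
    exact/jac_ray_deriv/hjac.
  - by move=> t /hint; apply: hpsd.
  - by move=> t /hint hi; have := hnu z hi; rewrite /= Rmult_1_r.
Qed.

Lemma hessian_cone_le_grad_sq x z : vinterior K x -> K z ->
  quad (HF x) z <= dot (gF x) z * dot (gF x) z.
Proof.
  move=> hx hz.
  have hint t : 0 <= t -> vinterior K (vadd x (vscale t z)) := cone_interior_ray hK hx hz.
  pose g t := - dot (gF (vadd x (vscale t z))) z.
  pose phi t := quad (HF (vadd x (vscale t z))) z.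
  have hphi t : 0 <= t -> 0 <= phi t by move/hint; apply: hpsd.
  have e0 : phi 0 = quad (HF x) z by rewrite /phi vadd_scale0.
  have eg : g 0 = - dot (gF x) z by rewrite /g vadd_scale0.
  suff : phi 0 <= g 0 * g 0 by rewrite e0 eg; lra.
  have [->|ne] := Req_dec (phi 0) 0; first nra.
  have hp0 : 0 < phi 0 by have := hphi 0 (Rle_refl 0); lra.
  have hs0 : 0 < sqrt (phi 0) by apply: sqrt_lt_R0.
  have hg0 : / / sqrt (phi 0) <= g 0.
  { apply: (inv_le_of_deriv_le (phi := phi)); first exact: Rinv_0_lt_compat.
    - move=> t /hint hi; apply: derivable_pt_lim_opp.
      apply: (ray_deriv_line (Phi := fun q => dot (gF q) z)); exact/jac_ray_deriv/hjac.
    - by move=> t /hint hi; have := grad_dot_cone_nonpos hi hz; rewrite /g; lra.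
    - apply: self_concordant_ray_lower_bound => //.
      + move=> t /hint hi; apply: (ray_deriv_line (Phi := fun q => quad (HF q) z)).
        exact/dmat_ray_deriv/hdmat.
      + move=> t /hint hi; have := hsc z hi.
        by have := Rle_abs (- cubic (T (vadd x (vscale t z))) z); rewrite Rabs_Ropp /phi; lra. }
  rewrite Rinv_inv in hg0; have := sqrt_sqrt _ (Rlt_le _ _ hp0); nra.
Qed.

End BarrierOnCone.

(** * The conjugate barrier on the dual slack *)

Lemma dual_cone_add n (K : vec n -> Prop) u v :
  dual_cone K u -> dual_cone K v -> dual_cone K (vadd u v).
Proof. by move=> hu hv x hx; rewrite dotDl; have := hu x hx; have := hv x hx; lra. Qed.

Lemma dual_cone_scale n (K : vec n -> Prop) t u :
  0 <= t -> dual_cone K u -> dual_cone K (vscale t u).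
Proof. by move=> ht hu x hx; rewrite dotZl; have := hu x hx; nra. Qed.

Lemma dual_cone_interior_comb n (K : vec n -> Prop) u w th : 0 < th <= 1 ->
  dual_cone K u -> vinterior (dual_cone K) w ->
  vinterior (dual_cone K) (vadd (vscale (1 - th) u) (vscale th w)).
Proof.
  move=> hth hu [e [he He]]; exists (th * e); split; first nra.
  move=> z hz; have -> : z = vadd (vscale (1 - th) u) (vscale th (vadd w (vscale (/ th)
                  (vsub z (vadd (vscale (1 - th) u) (vscale th w)))))).
    by apply: functional_extensionality => i; rewrite /vadd /vscale /vsub; field; lra.
  apply: dual_cone_add; apply: dual_cone_scale => //; try lra; apply: He.
  rewrite vaddKs vnormZ Rabs_right; last by left; apply: Rinv_0_lt_compat; lra.
  apply: (Rmult_lt_reg_l th); first lra.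
  by rewrite -Rmult_assoc Rinv_r; lra.
Qed.

(* [y] lies strictly between a strictly feasible [y0] and a feasible point slightly beyond [y]. *)
Lemma slack_interior n m (K : vec n -> Prop) (A : mat m n) c y y0 :
  vinterior (fun z : vec m => dual_cone K (vsub c (mulmv (trm A) z))) y ->
  vinterior (dual_cone K) (vsub c (mulmv (trm A) y0)) ->
  vinterior (dual_cone K) (vsub c (mulmv (trm A) y)).
Proof.
  move=> hy hy0; have [t [ht hy']] := near0_witness (near0_interior_ray (vsub y y0) hy).
  have -> : vsub c (mulmv (trm A) y)
          = vadd (vscale (1 - t / (1 + t)) (vsub c (mulmv (trm A) (vadd y (vscale t (vsub y y0))))))
                 (vscale (t / (1 + t)) (vsub c (mulmv (trm A) y0))).
  { rewrite mulmvD mulmvZ mulmvB.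
    by apply: functional_extensionality => i; rewrite /vadd /vsub /vscale; field; lra. }
  apply: dual_cone_interior_comb => //; last exact: (interior_mem hy').
  split; first by apply: Rdiv_lt_0_compat; lra.
  by apply: (Rmult_le_reg_r (1 + t)); [lra | rewrite /Rdiv Rmult_assoc Rinv_l; lra].
Qed.

Lemma derivable_pt_lim_dot_line n (s x h : vec n) t0 :
  derivable_pt_lim (fun t => dot s (vadd x (vscale t h))) t0 (dot s h).
Proof.
  have := derivable_pt_lim_plus _ _ t0 _ _ (derivable_pt_lim_const (dot s x) t0)
                                           (derivable_pt_lim_scal_id (dot s h) t0).
  rewrite Rplus_0_l; apply: derivable_pt_lim_ext => t.
  by rewrite /plus_fct /fct_cte dotDr dotZr Rmult_comm.
Qed.

Lemma grad_of_local_max n (F : vec n -> R) x g s : is_grad F x g ->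
  (exists d, 0 < d /\ forall q, vnorm (vsub q x) < d -> - dot s q - F q <= - dot s x - F x) ->
  forall h, dot g h = - dot s h.
Proof.
  move=> hg [d [hd Hd]] h.
  have hF : derivable_pt_lim (fun t => F (vadd x (vscale t h))) 0 (dot g h).
    by apply: grad_line; rewrite vadd_scale0.
  have := derivable_pt_lim_minus _ _ 0 _ _
            (derivable_pt_lim_opp _ _ _ (derivable_pt_lim_dot_line s x h 0)) hF.
  move/deriv_local_max; suff /[swap]/[apply] : exists d', 0 < d' /\ forall t, Rabs (t - 0) < d' ->
      (- dot s (vadd x (vscale t h))) - F (vadd x (vscale t h))
      <= (- dot s (vadd x (vscale 0 h))) - F (vadd x (vscale 0 h)) by lra.
  have hn := vnorm_ge0 h.
  exists (d / (vnorm h + 1)); split; first by apply: Rdiv_lt_0_compat; lra.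
  move=> t; rewrite Rminus_0_r vadd_scale0 => ht; apply: Hd.
  by rewrite vaddKs vnormZ; apply: lt_div_succ => //; apply: Rabs_pos.
Qed.

Section ConjugateBarrier.

Variables (n m : nat) (K : vec n -> Prop) (F Fs : vec n -> R) (gF : vec n -> vec n).
Variables (HF : vec n -> mat n n) (A : mat m n) (c : vec n).
Hypothesis hgrad : forall x, vinterior K x -> is_grad F x (gF x).
Hypothesis hjac : forall x, vinterior K x -> is_jac gF x (HF x).
Hypothesis hfenchel : forall s x, vinterior (dual_cone K) s -> vinterior K x ->
  - dot s x - F x <= Fs s.

Lemma hessian_sym x : vinterior K x -> form_sym (HF x).
Proof.
  move=> hx; have [r [hr Hr]] := interior_ball hx.
  apply: (jacobian_sym (phi := F) (g := gF) (p := x) hr) => [q /Hr|]; last exact: hjac.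
  exact: hgrad.
Qed.

Variables (x s : vec n) (y : vec m).
Hypothesis hx : vinterior K x.
Hypothesis hs : vinterior (dual_cone K) s.
Hypothesis hslack : s = vsub c (mulmv (trm A) y).
Hypothesis hattained : Fs s = - dot s x - F x.

Lemma grad_at_conj_maximizer h : dot (gF x) h = - dot s h.
Proof.
  apply: grad_of_local_max; first exact: hgrad.
  have [r [hr Hr]] := interior_ball hx; exists r; split => // q hq.
  by rewrite -hattained; apply: hfenchel => //; apply: Hr.
Qed.

(* Fenchel's inequality at [(s -+ t A^T v, x +- t w)], with equality at [t = 0], compared through
   the second differences of [Fs (c - A^T .)] at [y] and of [F] at [x]. *)
Lemma conj_hessian_lower_bound Hf :
  is_hessian (fun z : vec m => Fs (vsub c (mulmv (trm A) z))) y Hf ->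
  forall v w, 2 * dot (mulmv (trm A) v) w - quad (HF x) w <= quad Hf v.
Proof.
  move=> [gf [dd [hdd [hgf hjf]]]] v w; apply: Rnot_lt_le => hlt.
  set a := mulmv (trm A) v in hlt *.
  set Del := 2 * dot a w - quad (HF x) w - quad Hf v.
  have he : 0 < Del / 4 by rewrite /Del; lra.
  have [rx [hrx Hrx]] := interior_ball hx.
  have hgx q : vnorm (vsub q x) < rx -> is_grad F q (gF q) by move/Hrx; apply: hgrad.
  have := near0_and (second_difference_est hdd hgf hjf v he)
    (near0_and (second_difference_est hrx hgx (hjac hx) w he)
    (near0_and (near0_interior_ray (vopp a) hs) (near0_and (near0_interior_ray a hs)
    (near0_and (near0_interior_ray w hx) (near0_interior_ray (vopp w) hx))))).
  case/near0_witness => t [ht [H1 [H2 [iLp [iLm [ixp ixm]]]]]].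
  have eLp : vsub c (mulmv (trm A) (vadd y (vscale t v))) = vadd s (vscale t (vopp a)).
    by rewrite mulmvD mulmvZ hslack /a; apply: functional_extensionality => i;
       rewrite /vsub /vadd /vscale /vopp; ring.
  have eLm : vsub c (mulmv (trm A) (vadd y (vscale t (vopp v)))) = vadd s (vscale t a).
    by rewrite mulmvD mulmvZ mulmvN hslack /a; apply: functional_extensionality => i;
       rewrite /vsub /vadd /vscale /vopp; ring.
  move: H1; rewrite /= eLp eLm -hslack hattained => H1.
  have Ip := hfenchel iLp ixp; have Im := hfenchel iLm ixm.
  rewrite !vscaleN ?dotDl ?dotDr ?dotZl ?dotZr in Ip Im; rewrite !vscaleN in H1 H2.
  have hDel : 0 < Del by rewrite /Del; lra.
  have htt : 0 < t * t * Del by apply: Rmult_lt_0_compat => //; nra.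
  have := Rle_abs (Fs (vadd s (vscale (- t) a)) + Fs (vadd s (vscale t a))
                   - 2 * (- dot s x - F x) - t * t * quad Hf v).
  have := Rle_abs (F (vadd x (vscale t w)) + F (vadd x (vscale (- t) w)) - 2 * F x
                   - t * t * quad (HF x) w).
  rewrite /Del in htt he H1 H2; lra.
Qed.

End ConjugateBarrier.

Section SymmetricPsdForm.

Variables (n : nat) (M : mat n n).
Hypotheses (hsym : form_sym M) (hpsd : form_psd M).

Lemma form_CauchySchwarz p q : dot (mulmv M p) q * dot (mulmv M p) q <= quad M p * quad M q.
Proof.
  apply: discriminant_le; first exact: hpsd.
  move=> t; have := hpsd (vadd p (vscale t q)).
  rewrite /quad mulmvD mulmvZ !dotDl !dotDr !dotZl !dotZr (hsym q p); lra.
Qed.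

Lemma form_sqrt_sub_le p q : sqrt (quad M (vsub p q)) <= sqrt (quad M p) + sqrt (quad M q).
Proof.
  have hcs := form_CauchySchwarz p q.
  have h1 := sqrt_pos (quad M p); have h2 := sqrt_pos (quad M q).
  have e1 := sqrt_sqrt _ (hpsd p); have e2 := sqrt_sqrt _ (hpsd q).
  have hb : - dot (mulmv M p) q <= sqrt (quad M p) * sqrt (quad M q).
  { rewrite -e1 -e2 in hcs; have := Rmult_le_pos _ _ h1 h2.
    have [|hlt] := Rle_dec (- dot (mulmv M p) q) (sqrt (quad M p) * sqrt (quad M q)); [done | nra]. }
  have -> : quad M (vsub p q) = quad M p + quad M q - 2 * dot (mulmv M p) q.
    by rewrite /quad mulmvB !dotBl !dotBr (hsym q p); ring.
  rewrite -(sqrt_square (sqrt (quad M p) + sqrt (quad M q))); last lra.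
  apply: sqrt_le_1_alt; nra.
Qed.

Lemma form_null_kernel k : quad M k = 0 -> forall i, mulmv M k i = 0.
Proof.
  move=> hq; apply: dot_eq0; apply: Rle_antisym; last exact: dot_ge0.
  by have := form_CauchySchwarz k (mulmv M k); rewrite hq Rmult_0_l; nra.
Qed.

End SymmetricPsdForm.

Lemma right_inv_sym n (H B : mat n n) : form_sym H -> mulmm H B = idm n -> form_sym B.
Proof.
  move=> hs hi a b.
  by rewrite -{1}(mulmm_right_inv b hi) dotC hs (mulmm_right_inv a hi) dotC.
Qed.

Section GramForm.

Variables (m n : nat) (A : mat m n) (H B : mat n n).
Hypothesis hinv : mulmm H B = idm n.
Let G := mulmm A (mulmm B (trm A)).

Lemma gram_dot p q : dot (mulmv G p) q = dot (mulmv (trm A) q) (mulmv B (mulmv (trm A) p)).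
Proof. by rewrite !mulmv_mulmm dotC -dot_trmv. Qed.

Lemma gram_quad v : quad G v = quad H (mulmv B (mulmv (trm A) v)).
Proof. by rewrite /quad gram_dot mulmm_right_inv // dotC. Qed.

Lemma gram_sym : form_sym H -> form_sym G.
Proof. by move=> hs p q; rewrite !gram_dot dotC (right_inv_sym hs hinv) dotC. Qed.

Lemma gram_psd : form_psd H -> form_psd G.
Proof. by move=> hp v; rewrite gram_quad. Qed.

(* [G v = 0] forces [A^T v = H (B A^T v) = 0], and [A] is onto. *)
Lemma gram_definite : form_sym H -> form_psd H ->
  (forall v : vec m, exists x : vec n, mulmv A x = v) -> form_definite G.
Proof.
  move=> hs hp hA v hq; rewrite gram_quad in hq.
  have hker := form_null_kernel hs hp hq; rewrite mulmm_right_inv // in hker.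
  have [x hx] := hA v; apply: dot_eq0.
  rewrite -{2}hx -dot_trmv.
  by apply: big1 => i _; rewrite hker; ring.
Qed.

End GramForm.

Lemma definite_right_inv m (M : mat m m) : form_definite M ->
  exists Minv : mat m m, mulmm M Minv = idm m.
Proof.
  move=> hpd; pose N : 'M[R]_m := (\matrix_(i, j) M i j)%R.
  have hdet : (\det N != 0)%R.
  { apply/negP => /det0P [v nv vN]; pose w : vec m := fun i => v ord0 i.
    have hcol j : \big[Rplus/0]_(i < m) (w i * M i j) = 0.
    { have := congr1 (fun X : 'M[R]_(1, m) => X ord0 j) vN; rewrite !mxE => h.
      by rewrite -[RHS]h; apply: eq_bigr => i _; rewrite mxE. }
    have hq : quad M w = 0.
    { rewrite /quad /dot /mulmv.
      under eq_bigr => i _ do rewrite big_distrl.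
      rewrite exchange_big; apply: big1 => j _.
      rewrite (eq_bigr (fun i => w i * M i j * w j)); last by move=> i _ /=; ring.
      by rewrite -big_distrl /= hcol Rmult_0_l. }
    move/negP: nv; apply; apply/eqP/matrixP => i j.
    by rewrite (ord1 i) mxE; exact: hpd w hq j. }
  have hu : (N \in unitmx)%R by rewrite unitmxE GRing.unitfE.
  exists (fun i j => invmx N i j).
  apply: functional_extensionality => i; apply: functional_extensionality => k.
  have := congr1 (fun X : 'M[R]_m => X i k) (mulmxV hu); rewrite !mxE /mulmm /idm => h.
  transitivity (((i == k)%:R)%R : R); last by case: (i == k).
  by rewrite -h; apply: eq_bigr => j _; rewrite mxE.
Qed.

(* Loewner inversion, via Cauchy-Schwarz for [G] at [M^-1 u] and [G^-1 u]. *)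
Lemma loewner_le_right_inv m (M G Minv Ginv : mat m m) k :
  0 <= k -> form_psd M -> form_sym G -> form_psd G -> (forall v, quad G v <= k * quad M v) ->
  mulmm M Minv = idm m -> mulmm G Ginv = idm m -> loewner_le Minv (fun i j => k * Ginv i j).
Proof.
  move=> hk hM hGs hGp hle hMi hGi u; rewrite quad_scalem.
  set p := mulmv Minv u; set q := mulmv Ginv u.
  have hp : mulmv M p = u by exact: mulmm_right_inv.
  have hq : mulmv G q = u by exact: mulmm_right_inv.
  have -> : quad Minv u = quad M p by rewrite /quad hp dotC.
  have -> : quad Ginv u = quad G q by rewrite /quad hq dotC.
  have hcs := form_CauchySchwarz hGs hGp q p.
  rewrite (_ : dot (mulmv G q) p = quad M p) in hcs; last by rewrite hq /quad hp dotC.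
  have hX := hM p; have hY := hGp q; have := hle p.
  have [->|nx] := Req_dec (quad M p) 0; first by nra.
  move=> h; apply: (Rmult_le_reg_r (quad M p)); first lra.
  have : quad G q * quad G p <= quad G q * (k * quad M p) by apply: Rmult_le_compat_l.
  nra.
Qed.

Lemma form_definite_of_le m (M G : mat m m) k : form_psd G -> form_definite G ->
  (forall v, quad G v <= k * quad M v) -> form_definite M.
Proof.
  move=> hp hd hle v hv; apply: hd; have := hle v; have := hp v.
  by rewrite hv Rmult_0_r; lra.
Qed.

(** * Sharpness and the Hessian of the dual barrier *)

(* Add the sharpness inequalities at [y +- tau v] and use the triangle inequality for [sqrt G]. *)
Lemma sharp_segment_le m (Q : vec m -> Prop) (G : mat m m) b ystar fstar gd y v tau :
  form_sym G -> form_psd G -> 0 <= gd ->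
  (forall z, Q z -> fstar - dot b z >= gd * sqrt (quad G (vsub z ystar))) ->
  0 <= tau -> Q (vadd y (vscale tau v)) -> Q (vadd y (vscale tau (vopp v))) ->
  gd * (tau * sqrt (quad G v)) <= fstar - dot b y.
Proof.
  move=> hs hp hgd hsharp ht /hsharp h1 /hsharp h2.
  have := form_sqrt_sub_le hs hp (vsub (vadd y (vscale tau v)) ystar)
                                 (vsub (vadd y (vscale tau (vopp v))) ystar).
  rewrite (_ : vsub _ _ = vscale (2 * tau) v); last first.
    by apply: functional_extensionality => i; rewrite /vsub /vadd /vscale /vopp; ring.
  rewrite quadZ sqrt_mult; [|nra|exact: hp]; rewrite sqrt_square; last lra.
  move/(Rmult_le_compat_l gd _ _ hgd).
  rewrite !dotDr !dotZr in h1 h2; rewrite dotNr in h2; lra.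
Qed.

(* Test the lower bound [2 <a, w> - <H w, w> <= q] with [w] a multiple of the certificate [z]. *)
Lemma inv_sq_le_of_certificate n (H : mat n n) (s a z : vec n) tau q :
  0 < tau -> 0 <= dot s z -> quad H z <= dot s z * dot s z -> dot s z - tau * dot a z < 0 ->
  (forall w, 2 * dot a w - quad H w <= q) -> / (tau * tau) <= q.
Proof.
  move=> ht hd hz hneg hlb; set e := dot a z in hneg.
  have he : 0 < e by nra.
  set lam := / (tau * tau * e).
  have := hlb (vscale lam z); rewrite dotZr quadZ -/e.
  have hd2 : dot s z * dot s z <= (tau * e) * (tau * e) by nra.
  have : lam * lam * quad H z <= lam * lam * ((tau * e) * (tau * e)).
    by apply: Rmult_le_compat_l; nra.
  have -> : lam * lam * ((tau * e) * (tau * e)) = / (tau * tau) by rewrite /lam; field; nra.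
  have -> : 2 * (lam * e) = 2 / (tau * tau) by rewrite /lam; field; nra.
  rewrite /Rdiv; lra.
Qed.

Lemma not_dual_cone n (K : vec n -> Prop) w : ~ dual_cone K w -> exists z, K z /\ dot w z < 0.
Proof.
  move=> hn; apply: NNPP => hno; apply: hn => z hz; apply: Rnot_lt_le => hlt.
  by apply: hno; exists z.
Qed.

Section DualHessianBound.

Variables (n m : nat) (K : vec n -> Prop) (A : mat m n) (c : vec n) (b : vec m).
Variables (G Hf : mat m m) (H : mat n n) (ystar y : vec m) (fstar gd : R).
Let Q z := dual_cone K (vsub c (mulmv (trm A) z)).
Let s := vsub c (mulmv (trm A) y).
Hypotheses (hGsym : form_sym G) (hGpsd : form_psd G) (hgd : 0 < gd).
Hypothesis hsharp : forall z, Q z -> fstar - dot b z >= gd * sqrt (quad G (vsub z ystar)).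
Hypothesis hy : vinterior Q y.
Hypothesis hcone : forall z, K z -> quad H z <= dot s z * dot s z.
Hypothesis hlb : forall v w, 2 * dot (mulmv (trm A) v) w - quad H w <= quad Hf v.

Lemma dual_hessian_psd : form_psd Hf.
Proof. by move=> v; have := hlb v vzero; rewrite dot0r quad0; lra. Qed.

(* With [tau = 2 r / (gd |v|_G)] one of [y +- tau v] leaves [Q], and the certificate of that
   gives [<Hf v, v> >= 1 / tau^2]. *)
Lemma dual_hessian_ge_gram v : quad G v <= 4 / gd ^ 2 * (fstar - dot b y) ^ 2 * quad Hf v.
Proof.
  set r := fstar - dot b y; have hHf := dual_hessian_psd v; have hGv := hGpsd v.
  have hk : 0 <= 4 / gd ^ 2 * r ^ 2.
    by have := Rinv_0_lt_compat _ (pow_lt gd 2 hgd); have := pow2_ge_0 r; rewrite /Rdiv; nra.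
  have [e0|ne0] := Req_dec (quad G v) 0; first by rewrite e0; apply: Rmult_le_pos.
  set N := sqrt (quad G v); have hN : 0 < N by apply: sqrt_lt_R0; lra.
  have hNN : N * N = quad G v by apply: sqrt_sqrt.
  have hseg tau : 0 <= tau -> Q (vadd y (vscale tau v)) -> Q (vadd y (vscale tau (vopp v))) ->
      gd * (tau * N) <= r.
    by move=> ht; apply: (sharp_segment_le hGsym hGpsd (Rlt_le _ _ hgd) hsharp ht).
  have hr : 0 < r.
  { have [t [ht [h1 h2]]] := near0_witness (near0_and (near0_interior_ray v hy)
                                                       (near0_interior_ray (vopp v) hy)).
    have := hseg t (Rlt_le _ _ ht) (interior_mem h1) (interior_mem h2).
    have : 0 < gd * (t * N) by apply: Rmult_lt_0_compat => //; nra.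
    lra. }
  set tau := 2 * r / (gd * N); have ht : 0 < tau by apply: Rdiv_lt_0_compat; nra.
  suff [u [hGu [hHu hout]]] : exists u, quad G u = quad G v /\ quad Hf u = quad Hf v /\
                                        ~ Q (vadd y (vscale tau u)).
  { have [z [hz hneg]] := not_dual_cone hout.
    rewrite mulmvD mulmvZ (_ : vsub _ _ = vsub s (vscale tau (mulmv (trm A) u))) in hneg; last first.
      by apply: functional_extensionality => i; rewrite /s /vsub /vadd /vscale; ring.
    rewrite dotBl dotZl in hneg.
    have := inv_sq_le_of_certificate ht (interior_mem hy z hz) (hcone hz) hneg (hlb u).
    rewrite hHu => hinv.
    have <- : 4 / gd ^ 2 * r ^ 2 * / (tau * tau) = quad G v by rewrite -hNN /tau; field; nra.
    exact: Rmult_le_compat_l. }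
  have [hq|hq] := classic (Q (vadd y (vscale tau v))); last by exists v.
  exists (vopp v); rewrite !quadN; do 2!split => //; move=> hq2.
  have := hseg tau (Rlt_le _ _ ht) hq hq2.
  have -> : gd * (tau * N) = 2 * r by rewrite /tau; field; nra.
  lra.
Qed.

End DualHessianBound.

Unset Implicit Arguments. Set Strict Implicit.

Theorem mainTheorem6
  (n m : nat) (K : vec n -> Prop) (nu : R)
  (F : vec n -> R) (gF : vec n -> vec n) (HF : vec n -> mat n n)
  (Fs : vec n -> R)
  (A : mat m n) (c : vec n) (b : vec m)
  (hK : regular_cone K)
  (hF : normal_barrier K nu F gF HF)
  (hFs : is_dual_barrier K F Fs)
  (hA : forall v : vec m, exists x : vec n, mulmv A x = v)
  (hprim : exists x, vinterior K x /\ mulmv A x = b)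
  (hdual : exists y : vec m, vinterior (dual_cone K) (vsub c (mulmv (trm A) y)))
  (fstar : R)
  (hfstar : (forall y : vec m, dual_cone K (vsub c (mulmv (trm A) y)) -> dot b y <= fstar) /\
            (forall v, (forall y : vec m, dual_cone K (vsub c (mulmv (trm A) y)) -> dot b y <= v) ->
                       fstar <= v))
  (x1 s1 : vec n) (y1 : vec m)
  (hx1 : vinterior K x1)
  (hcp : mulmv A x1 = b /\ vadd s1 (mulmv (trm A) y1) = c /\ s1 = vscale (-1) (gF x1))
  (Binv : mat n n) (hBinv : mulmm (HF x1) Binv = idm n)
  (gd : R) (hgd : 0 < gd)
  (hsharp : exists ystar : vec m,
      dual_cone K (vsub c (mulmv (trm A) ystar)) /\ dot b ystar = fstar /\
      forall y : vec m, dual_cone K (vsub c (mulmv (trm A) y)) ->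
        fstar - dot b y >=
        gd * sqrt (quad (mulmm A (mulmm Binv (trm A))) (vsub y ystar)))
  (y : vec m)
  (hy : vinterior (fun z : vec m => dual_cone K (vsub c (mulmv (trm A) z))) y)
  (Hf : mat m m)
  (hHf : is_hessian (fun z : vec m => Fs (vsub c (mulmv (trm A) z))) y Hf) :
  (exists Hfinv : mat m m, mulmm Hf Hfinv = idm m) /\
  forall (Hfinv Ginv : mat m m),
    mulmm Hf Hfinv = idm m ->
    mulmm (mulmm A (mulmm Binv (trm A))) Ginv = idm m ->
    loewner_le Hfinv
      (fun i j => 4 / gd ^ 2 * (fstar - dot b y) ^ 2 * Ginv i j).
Proof.
  case: hF => T [hgrad [hjac [hdmat [_ [hpsd [hsc [hnu _]]]]]]].
  have [y0 hy0] := hdual; set s := vsub c (mulmv (trm A) y).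
  have hs : vinterior (dual_cone K) s := slack_interior hy hy0.
  have hfenchel s' x' : vinterior (dual_cone K) s' -> vinterior K x' -> - dot s' x' - F x' <= Fs s'.
    by move=> hs'; apply: (proj2 (hFs s' hs')).
  have [x [hx hFx]] := proj1 (hFs s hs).
  have hlb := conj_hessian_lower_bound hgrad hjac hfenchel hx hs (erefl s) hFx hHf.
  have hcone z : K z -> quad (HF x) z <= dot s z * dot s z.
  { move=> hz; have := hessian_cone_le_grad_sq hK hjac hdmat hpsd hsc hnu hx hz.
    by rewrite (grad_at_conj_maximizer hgrad hfenchel hx hs hFx); lra. }
  have hH1sym := hessian_sym hgrad hjac hx1.
  have hH1psd : form_psd (HF x1) by move=> h; apply: hpsd.
  have hGsym := gram_sym A hBinv hH1sym; have hGpsd := gram_psd A hBinv hH1psd.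
  have [ystar [_ [_ hsharpy]]] := hsharp.
  have hbound := dual_hessian_ge_gram hGsym hGpsd hgd hsharpy hy hcone hlb.
  have hk : 0 <= 4 / gd ^ 2 * (fstar - dot b y) ^ 2.
  { have := Rinv_0_lt_compat _ (pow_lt gd 2 hgd); have := pow2_ge_0 (fstar - dot b y).
    by rewrite /Rdiv; nra. }
  have hGdef := gram_definite hBinv hH1sym hH1psd hA.
  split; first exact/definite_right_inv/(form_definite_of_le hGpsd hGdef hbound).
  by move=> Hfinv Ginv; apply: loewner_le_right_inv hk (dual_hessian_psd hlb) hGsym hGpsd hbound.
Qed.
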